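(* Let $\mathfrak g$ be a finite-dimensional complex simple Lie algebra with Cartan subalgebra $\mathfrak t$ and root system $\Phi_{\mathfrak g}$. Let $Q=\sum_{i=1}^pA_ix^i$ with $p\ge1$, $A_i\in\mathfrak t$, $A_p\ne0$; for $\alpha\in\Phi_{\mathfrak g}$ let $d_\alpha=\deg_x\bigl(\sum_i\alpha(A_i)x^i\bigr)$ (with $\deg_x(0)=0$) and for $i\in\{1,\dots,p\}$ let $$\mathbf B_i=\bigcap_{\alpha:\ d_\alpha<i}\operatorname{Ker}(\alpha)\cap\bigcap_{\alpha:\ d_\alpha=i}\bigl(\mathfrak t\setminus\operatorname{Ker}(\alpha)\bigr)\subset\mathfrak t,$$ so that $A_i\in\mathbf B_i$ and the pure local wild mapping class group satisfies $\Gamma_Q\simeq\prod_{i=1}^p\pi_1(\mathbf B_i,A_i)$. Then the number of indices $i\in\{1,\dots,p\}$ for which $\pi_1(\mathbf B_i,A_i)$ is nontrivial is at most $\operatorname{rk}(\mathfrak g)$.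
   Context: $\Gamma_Q=\pi_1(\mathbf B_Q,(A_1,\dots,A_p))$ where $\mathbf B_Q=\{(A_1',\dots,A_p')\in\mathfrak t^p:\deg_x(\sum_i\alpha(A_i')x^i)=d_\alpha\ \forall\alpha\in\Phi_{\mathfrak g}\}$; one has $\mathbf B_Q=\prod_i\mathbf B_i$. $\operatorname{rk}(\mathfrak g)=\dim\mathfrak t$. *)

From HB Require Import structures.
From mathcomp Require Import all_boot all_order all_algebra.
From mathcomp Require Import all_classical all_reals all_analysis.
From mathcomp Require Import complex.
Import Order.TTheory GRing.Theory Num.Theory ComplexField.

Set Implicit Arguments.
Unset Strict Implicit.
Unset Printing Implicit Defensive.

Local Open Scope ring_scope.

(* The complex numbers R[i] (R a realType) carry their norm topology;
   hence 'rV[R[i]]_n = C^n gets the product topology. *)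
HB.instance Definition _ (R : rcfType) :=
  PseudoPointedMetric.copy R[i] (R[i])^o.

Section LieDefs.
Variables (R : realType) (n : nat).
Local Notation C := (R[i]).
Local Notation V := ('rV[C]_n).

Definition is_lie_bracket (br : V -> V -> V) : Prop :=
  [/\ (forall (a : C) (x y z : V), br (a *: x + y) z = a *: br x z + br y z),
      (forall (a : C) (x y z : V), br z (a *: x + y) = a *: br z x + br z y),
      (forall x : V, br x x = 0) &
      (forall x y z : V, br x (br y z) + br y (br z x) + br z (br x y) = 0)].

(* Ideals are represented by (the row space of) square matrices. *)
Definition lie_ideal (br : V -> V -> V) (I : 'M[C]_n) : Prop :=
  forall x y : V, (y <= I)%MS -> (br x y <= I)%MS.

Definition is_simple_lie (br : V -> V -> V) : Prop :=
  [/\ is_lie_bracket br,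
      (exists x y : V, br x y != 0) &
      (forall I : 'M[C]_n, lie_ideal br I -> \rank I = 0%N \/ \rank I = n)].

Definition is_cartan (br : V -> V -> V) (T : 'M[C]_n) : Prop :=
  [/\ (forall x y : V, (x <= T)%MS -> (y <= T)%MS -> (br x y <= T)%MS),
      (exists k : nat, forall (s : seq V) (y : V), size s = k ->
          all (fun x => (x <= T)%MS) s -> (y <= T)%MS -> foldr br y s = 0) &
      (forall x : V, (forall h : V, (h <= T)%MS -> (br x h <= T)%MS) ->
          (x <= T)%MS)].

Definition lfun (a : 'cV[C]_n) (h : V) : C := (h *m a) 0 0.

(* a represents a root (its restriction to t is a root): nonzero on t and
   with a nonzero root space. *)
Definition is_root (br : V -> V -> V) (T : 'M[C]_n) (a : 'cV[C]_n) : Prop :=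
  (exists h : V, (h <= T)%MS /\ lfun a h != 0) /\
  (exists x : V, x != 0 /\
     forall h : V, (h <= T)%MS -> br h x = lfun a h *: x).

(* d_alpha = deg_x (sum_{i=1}^p alpha(A_i) x^i), with deg 0 = 0. *)
Definition d_root (p : nat) (A : nat -> V) (a : 'cV[C]_n) : nat :=
  (size (\poly_(i < p.+1) (if i == 0%N then 0 else lfun a (A i)))).-1.

Definition Bset (br : V -> V -> V) (T : 'M[C]_n) (p : nat) (A : nat -> V)
    (i : nat) : set V :=
  [set h | [/\ (h <= T)%MS,
    (forall a, is_root br T a -> (d_root p A a < i)%N -> lfun a h = 0) &
    (forall a, is_root br T a -> d_root p A a = i -> lfun a h != 0)]].

Local Open Scope classical_set_scope.

Definition pi1_nontrivial (B : set V) (x0 : V) : Prop :=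
  exists g : R -> V,
    [/\ {within `[0, 1], continuous g}, g @` `[0, 1] `<=` B,
        g 0 = x0, g 1 = x0 &
        ~ exists H : R * R -> V,
            [/\ {within `[0, 1] `*` `[0, 1], continuous H},
                H @` (`[0, 1] `*` `[0, 1]) `<=` B,
                (forall s : R, 0 <= s <= 1 -> H (s, 0) = g s /\ H (s, 1) = x0) &
                (forall t : R, 0 <= t <= 1 -> H (0, t) = x0 /\ H (1, t) = x0)]].

End LieDefs.

(* If no root has degree exactly i, then B_i is cut out of t by linear
   equations only, so it is star-shaped about A_i and the straight-line
   homotopy contracts every loop: pi_1(B_i, A_i) is trivial.  Hence every
   index i with nontrivial pi_1 carries a root alpha_i with d_(alpha_i) = i,
   i.e. alpha_i(A_i) <> 0 and alpha_i(A_j) = 0 for j > i.  The matrix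
   (alpha_i(A_j)) over these indices is then triangular with nonzero
   diagonal, so the corresponding A_i are linearly independent in t. *)

From HB Require Import structures.
From mathcomp Require Import all_boot all_order all_algebra.
From mathcomp Require Import all_classical all_reals all_analysis.
From mathcomp Require Import complex.
Import Order.TTheory GRing.Theory Num.Theory ComplexField.
Import numFieldNormedType.Exports.
Set Implicit Arguments.
Unset Strict Implicit.
Unset Printing Implicit Defensive.

Local Open Scope ring_scope.
Local Open Scope classical_set_scope.
Local Open Scope complex_scope.

Lemma within_continuous_fst {X Y Z : topologicalType} (A : set X) (B : set Y)
    (f : X -> Z) :
  {within A, continuous f} -> {within A `*` B, continuous (f \o fst)}.
Proof.
move=> cf; apply/continuous_subspace_prodP => x _.
apply: (@continuous_comp (subspace A * subspace B)%type (subspace A) Z fst f).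
  exact: cvg_fst.
exact: cf.
Qed.

Lemma within_continuous_snd {X Y Z : topologicalType} (A : set X) (B : set Y)
    (f : Y -> Z) :
  {within B, continuous f} -> {within A `*` B, continuous (f \o snd)}.
Proof.
move=> cf; apply/continuous_subspace_prodP => x _.
apply: (@continuous_comp (subspace A * subspace B)%type (subspace B) Z snd f).
  exact: cvg_snd.
exact: cf.
Qed.

Lemma normc_realC (R : rcfType) (x : R) : `|x%:C| = `|x|%:C :> R[i].
Proof. by rewrite normc_def /= expr0n addr0 sqrtr_sqr. Qed.

Lemma realC_continuous (R : realType) : continuous (fun t : R => t%:C : R[i]^o).
Proof.
move=> t; apply/cvgrPdist_lt => e e_gt0.
have Re_e_gt0 : 0 < complex.Re e by rewrite -ltcR RRe_real ?gtr0_real.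
rewrite -(RRe_real (gtr0_real e_gt0)).
near=> s; rewrite -rmorphB normc_realC ltcR.
by near: s; exact: cvgr_dist_lt.
Unshelve. all: end_near.
Qed.

Section StarShaped.
Variables (R : realType) (n : nat).
Local Notation V := 'rV[R[i]]_n.

Definition star_shaped (B : set V) (x0 : V) : Prop :=
  forall (v : V) (t : R), B v -> 0 <= t <= 1 -> B (v + t%:C *: (x0 - v)).

Definition line_homotopy (g : R -> V) (x0 : V) (st : R * R) : V :=
  g st.1 + st.2%:C *: (x0 - g st.1).

Lemma line_homotopy_continuous (A B : set R) (g : R -> V) (x0 : V) :
  {within A, continuous g} -> {within A `*` B, continuous line_homotopy g x0}.
Proof.
move=> cg st.
have cg1 := @within_continuous_fst _ _ _ _ B _ cg st.
have cr2 := @within_continuous_snd _ _ _ A _ _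
  (continuous_subspaceT (@realC_continuous R)) st.
apply: (@cvgD _ ('rV[R[i]^o]_n)); first exact: cg1.
apply: (@cvgZ _ ('rV[R[i]^o]_n)); first exact: cr2.
by apply: (@cvgB _ ('rV[R[i]^o]_n)); [exact: cvg_cst | exact: cg1].
Qed.

Lemma star_shaped_pi1_trivial (B : set V) (x0 : V) :
  star_shaped B x0 -> ~ pi1_nontrivial B x0.
Proof.
move=> starB [g [cg gB g0 g1]]; apply.
exists (line_homotopy g x0); split.
- exact: line_homotopy_continuous.
- move=> _ [[s t] [/= s01 t01] <-]; apply: starB; last by rewrite in_itv in t01.
  by apply: gB; exists s.
- by move=> s _; rewrite /line_homotopy /= scale0r addr0 scale1r addrC subrK.
- by move=> t _; rewrite /line_homotopy /= g0 g1 subrr scaler0 addr0.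
Qed.

End StarShaped.

Local Close Scope classical_set_scope.

Lemma row_free_triangular (F : fieldType) (m n : nat) (M : 'M[F]_(m, n))
    (w : 'I_m -> nat) :
  injective w ->
  (forall k, exists2 a : 'cV[F]_n, (row k M *m a) 0 0 != 0 &
     forall j, (w k < w j)%N -> (row j M *m a) 0 0 = 0) ->
  row_free M.
Proof.
move=> w_inj triM; apply/inj_row_free => v vM0; apply/rowP => k0; rewrite mxE.
apply/eqP; apply: contraT => vk0_neq0.
have [k vk_neq0 k_min] := @arg_minnP _ k0 (fun k => v 0 k != 0) w vk0_neq0.
have [a Mka_neq0 Mja0] := triM k.
have := congr1 (fun u => (u *m a) 0 0) vM0.
rewrite /= (mulmx_sum_row v) mulmx_suml summxE mul0mx [RHS]mxE.
rewrite (bigD1 k) //= big1 ?addr0 => [|j j_neq_k].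
  rewrite -scalemxAl mxE => /eqP.
  by rewrite mulf_eq0 (negbTE vk_neq0) (negbTE Mka_neq0).
rewrite -scalemxAl mxE.
have [->|vj_neq0] := eqVneq (v 0 j) 0; first by rewrite mul0r.
rewrite Mja0 ?mulr0 // ltn_neqAle k_min // andbT.
by apply: contra j_neq_k => /eqP /w_inj ->.
Qed.

Section Roots.
Variables (R : realType) (n : nat).
Local Notation V := 'rV[R[i]]_n.

Lemma lfun_gt_d_root (p : nat) (A : nat -> V) a j :
  (d_root p A a < j <= p)%N -> lfun a (A j) = 0.
Proof.
rewrite /d_root; set P := \poly_(_ < _) _ => /andP[dj jp].
have : P`_j = 0 by apply: nth_default; case: (size P) dj.
by rewrite /P coef_poly ltnS jp (gtn_eqF (leq_ltn_trans (leq0n _) dj)).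
Qed.

Lemma lfun_d_root_neq0 (p : nat) (A : nat -> V) a :
  (0 < d_root p A a)%N -> lfun a (A (d_root p A a)) != 0.
Proof.
rewrite /d_root; set P := \poly_(_ < _) _; move=> d_gt0.
have sizeP : size P = (size P).-1.+1 by case: (size P) d_gt0.
have : lead_coef P != 0 by rewrite lead_coef_eq0 -size_poly_eq0 sizeP.
by rewrite lead_coefE /P coef_poly -/P -sizeP size_poly (gtn_eqF d_gt0).
Qed.

Lemma A_in_Bset br (T : 'M[R[i]]_n) p (A : nat -> V) (i : nat) :
  (0 < i <= p)%N -> (A i <= T)%MS -> Bset br T p A i (A i).
Proof.
move=> /andP[i_gt0 ip] AiT; split => // a _ da.
  by apply: (lfun_gt_d_root (p := p)); rewrite da ip.
by rewrite -da; apply: lfun_d_root_neq0; rewrite da.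
Qed.

Lemma Bset_star_shaped br (T : 'M[R[i]]_n) p (A : nat -> V) (i : nat) x0 :
  (forall a, is_root br T a -> d_root p A a != i) ->
  Bset br T p A i x0 -> star_shaped (Bset br T p A i) x0.
Proof.
move=> no_root [x0T x0_0 _] v t [vT v0 _] _; split.
- by rewrite addmx_sub ?scalemx_sub ?addmx_sub ?eqmx_opp.
- move=> a ra da; move: (x0_0 a ra da) (v0 a ra da).
  rewrite /lfun mulmxDl -scalemxAl mulmxBl !mxE => -> ->.
  by rewrite subrr mulr0 addr0.
- by move=> a ra da; have := no_root a ra; rewrite da eqxx.
Qed.

End Roots.

Theorem corollary5p6 (R : realType) (n : nat)
    (br : 'rV[R[i]]_n -> 'rV[R[i]]_n -> 'rV[R[i]]_n) (T : 'M[R[i]]_n)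
    (p : nat) (A : nat -> 'rV[R[i]]_n) :
  is_simple_lie br -> is_cartan br T ->
  (1 <= p)%N ->
  (forall i, (1 <= i <= p)%N -> (A i <= T)%MS) ->
  A p != 0 ->
  (#|[set i : 'I_p.+1 |
       (0 < i)%N && `[< pi1_nontrivial (Bset br T p A i) (A i) >]]|
     <= \rank T)%N.
Proof.
move=> _ _ _ AT _.
set S := [set i : 'I_p.+1 | _].
have S_bounds (i : 'I_p.+1) : i \in S -> (0 < i <= p)%N.
  by rewrite inE => /andP[-> _]; rewrite -ltnS ltn_ord.
have S_root (i : 'I_p.+1) :
    i \in S -> exists2 a, is_root br T a & d_root p A a = i.
  move=> /[dup] iS; rewrite inE => /andP[_ /asboolP].
  apply: contraPP => no_root.
  have Bi := A_in_Bset br (S_bounds i iS) (AT i (S_bounds i iS)).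
  apply/star_shaped_pi1_trivial/Bset_star_shaped => // a ra.
  by apply/eqP => da; apply: no_root; exists a.
pose M := \matrix_(k < #|S|) A (enum_val k).
have M_sub_T : (M <= T)%MS.
  by apply/row_subP => k; rewrite rowK AT // S_bounds ?enum_valP.
have M_free : row_free M.
  apply: (@row_free_triangular _ _ _ M (fun k => val (enum_val k))).
    by move=> k l /val_inj /enum_val_inj.
  move=> k; have [a _ da] := S_root _ (enum_valP k).
  exists a => [|j lt_kj]; rewrite !rowK.
    have /andP[k_gt0 _] := S_bounds _ (enum_valP k).
    by rewrite -da; apply: lfun_d_root_neq0; rewrite da.
  have /andP[_ jp] := S_bounds _ (enum_valP j).
  by apply: (lfun_gt_d_root (p := p)); rewrite da lt_kj.
by rewrite -(eqP M_free) mxrankS.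
Qed.
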